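(* Let $(\boldsymbol{\omega}^*,\boldsymbol{P}_{\mathrm M}^{\mathrm r*},\boldsymbol{P}_{\mathrm L}^{\mathrm r*},\boldsymbol{P}^*,\boldsymbol{\psi}^* )$ be an optimal solution of problem (OFC-mod). Then $\boldsymbol{\omega}^*=\boldsymbol{0}$, and $(\boldsymbol{P}_{\mathrm M}^{\mathrm r*},\boldsymbol{P}_{\mathrm L}^{\mathrm r*},\boldsymbol{\theta}^* )$ with $\theta_i^*=\psi_i^*-\psi^*_{\mathrm{ref}}$ for all $i\in\mathcal N$ is an optimal solution of problem (OFC).
   Context: Power network: a set of buses $\mathcal N=\{1,\dots,|\mathcal N|\}$ and a set of lines $\mathcal E\subset\mathcal N\times\mathcal N$ (ordered pairs $ij$). $\mathcal N$ is partitioned into disjoint sets $\mathcal N_{\mathrm M}$ (grid-forming buses) and $\mathcal N_{\mathrm L}$ (grid-following buses), and a reference bus $\mathrm{ref}\in\mathcal N$ is fixed. Given data: droop coefficients $k_i^{\mathrm M}>0$ ($i\in\mathcal N_{\mathrm M}$), $k_i^{\mathrm L}>0$ ($i\in\mathcal N_{\mathrm L}$); line parameters $B_{ij}$ ($ij\in\mathcal E$); net demands $P_i^{\mathrm d}\in\mathbb R$ ($i\in\mathcal N$); bounds $\underline P^{\mathrm r}_{\mathrm M,i}\le\overline P^{\mathrm r}_{\mathrm M,i}$, $\underline P^{\mathrm r}_{\mathrm L,i}\le\overline P^{\mathrm r}_{\mathrm L,i}$, $\underline P_{ij}\le\overline P_{ij}$; cost functions $c_i^{\mathrm M},c_i^{\mathrm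 L}:\mathbb R\to\mathbb R$. Problem (OFC), in variables $P^{\mathrm r}_{\mathrm M,i}$ ($i\in\mathcal N_{\mathrm M}$), $P^{\mathrm r}_{\mathrm L,i}$ ($i\in\mathcal N_{\mathrm L}$), $\theta_i$ ($i\in\mathcal N$): minimize $\sum_{i\in\mathcal N_{\mathrm M}}c_i^{\mathrm M}(P^{\mathrm r}_{\mathrm M,i})+\sum_{i\in\mathcal N_{\mathrm L}}c_i^{\mathrm L}(P^{\mathrm r}_{\mathrm L,i})$ subject to $P^{\mathrm r}_{\mathrm M,i}=P_i^{\mathrm d}+\sum_{j:ij\in\mathcal E}B_{ij}(\theta_i-\theta_j)$ ($i\in\mathcal N_{\mathrm M}$); $P^{\mathrm r}_{\mathrm L,i}=P_i^{\mathrm d}+\sum_{j:ij\in\mathcal E}B_{ij}(\theta_i-\theta_j)$ ($i\in\mathcal N_{\mathrm L}$); $\underline P^{\mathrm r}_{\mathrm M,i}\le P^{\mathrm r}_{\mathrm M,i}\le\overline P^{\mathrm r}_{\mathrm M,i}$; $\underline P^{\mathrm r}_{\mathrm L,i}\le P^{\mathrm r}_{\mathrm L,i}\le\overline P^{\mathrm r}_{\mathrm L,i}$; $\underline P_{ij}\le B_{ij}(\theta_i-\theta_j)\le\overline P_{ij}$ ($ij\in\mathcal E$); $\theta_{\mathrm{ref}}=0$. Problem (OFC-mod), in variables $\boldsymbol\omega=(\omega_i)_{i\in\mathcal N}$, $\boldsymbol P^{\mathrm r}_{\mathrm M}=(P^{\mathrm r}_{\mathrm M,i})_{i\in\mathcal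 N_{\mathrm M}}$, $\boldsymbol P^{\mathrm r}_{\mathrm L}=(P^{\mathrm r}_{\mathrm L,i})_{i\in\mathcal N_{\mathrm L}}$, $\boldsymbol P=(P_{ij})_{ij\in\mathcal E}$, $\boldsymbol\psi=(\psi_i)_{i\in\mathcal N}$: minimize $\sum_{i\in\mathcal N_{\mathrm M}}c_i^{\mathrm M}(P^{\mathrm r}_{\mathrm M,i})+\sum_{i\in\mathcal N_{\mathrm L}}c_i^{\mathrm L}(P^{\mathrm r}_{\mathrm L,i})+\tfrac12\sum_{i\in\mathcal N_{\mathrm M}}k_i^{\mathrm M}\omega_i^2+\tfrac12\sum_{i\in\mathcal N_{\mathrm L}}k_i^{\mathrm L}\omega_i^2$ subject to (a) $P^{\mathrm r}_{\mathrm M,i}=k_i^{\mathrm M}\omega_i+P_i^{\mathrm d}+\sum_{j:ij\in\mathcal E}P_{ij}$, $i\in\mathcal N_{\mathrm M}$; (b) $P^{\mathrm r}_{\mathrm L,i}=k_i^{\mathrm L}\omega_i+P_i^{\mathrm d}+\sum_{j:ij\in\mathcal E}P_{ij}$, $i\in\mathcal N_{\mathrm L}$; (c) $P^{\mathrm r}_{\mathrm M,i}=P_i^{\mathrm d}+\sum_{j:ij\in\mathcal E}B_{ij}(\psi_i-\psi_j)$, $i\in\mathcal N_{\mathrm M}$; (d) $P^{\mathrm r}_{\mathrm L,i}=P_i^{\mathrm d}+\sum_{j:ij\in\mathcal E}B_{ij}(\psi_i-\psi_j)$, $i\in\mathcal N_{\mathrm L}$; (e) $\underline P^{\mathrm r}_{\mathrm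 M,i}\le P^{\mathrm r}_{\mathrm M,i}\le\overline P^{\mathrm r}_{\mathrm M,i}$, $i\in\mathcal N_{\mathrm M}$; (f) $\underline P^{\mathrm r}_{\mathrm L,i}\le P^{\mathrm r}_{\mathrm L,i}\le\overline P^{\mathrm r}_{\mathrm L,i}$, $i\in\mathcal N_{\mathrm L}$; (g) $\underline P_{ij}\le B_{ij}(\psi_i-\psi_j)\le\overline P_{ij}$, $ij\in\mathcal E$. *)

From HB Require Import structures.
From mathcomp Require Import all_boot all_order all_algebra.
Set Implicit Arguments. Unset Strict Implicit. Unset Printing Implicit Defensive.
Import Order.TTheory GRing.Theory Num.Theory.
Local Open Scope ring_scope.

(* Buses: N = NM + NL (disjoint union of grid-forming buses NM and
   grid-following buses NL).  Lines: E : rel N (ordered pairs ij). *)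
Notation bus NM NL := (NM + NL)%type.

Record network (R : realFieldType) (NM NL : finType) := Network {
  E : rel (bus NM NL);
  refb : bus NM NL;
  kM : NM -> R;
  kL : NL -> R;
  Bl : bus NM NL -> bus NM NL -> R;
  Pd : bus NM NL -> R;
  PMlo : NM -> R; PMup : NM -> R;
  PLlo : NL -> R; PLup : NL -> R;
  Plo : bus NM NL -> bus NM NL -> R;
  Pup : bus NM NL -> bus NM NL -> R;
  cM : NM -> R -> R;
  cL : NL -> R -> R
}.

Section Problems.
Variables (R : realFieldType) (NM NL : finType) (D : network R NM NL).
Local Notation N := (bus NM NL).

Definition Bflow (x : N -> R) (i : N) : R :=
  \sum_(j | E D i j) Bl D i j * (x i - x j).

Definition Pflow (P : N -> N -> R) (i : N) : R :=
  \sum_(j | E D i j) P i j.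

Definition gen_cost (PM : NM -> R) (PL : NL -> R) : R :=
  \sum_(i : NM) cM D i (PM i) + \sum_(i : NL) cL D i (PL i).

Definition OFC_feasible (PM : NM -> R) (PL : NL -> R) (th : N -> R) : Prop :=
  ((forall i : NM, PM i = Pd D (inl i) + Bflow th (inl i))) /\
      ((forall i : NL, PL i = Pd D (inr i) + Bflow th (inr i))) /\
      ((forall i : NM, PMlo D i <= PM i <= PMup D i)) /\
      ((forall i : NL, PLlo D i <= PL i <= PLup D i)) /\
      ((forall i j : N, E D i j ->
          Plo D i j <= Bl D i j * (th i - th j) <= Pup D i j)) /\
    th (refb D) = 0.

Definition OFC_cost (PM : NM -> R) (PL : NL -> R) : R := gen_cost PM PL.

Definition OFC_optimal (PM : NM -> R) (PL : NL -> R) (th : N -> R) : Prop :=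
  OFC_feasible PM PL th /\
  forall PM' PL' th', OFC_feasible PM' PL' th' ->
    OFC_cost PM PL <= OFC_cost PM' PL'.

Definition OFCmod_feasible (w : N -> R) (PM : NM -> R) (PL : NL -> R)
    (P : N -> N -> R) (psi : N -> R) : Prop :=
  ((forall i : NM, PM i = kM D i * w (inl i) + Pd D (inl i) + Pflow P (inl i))) /\
      ((forall i : NL, PL i = kL D i * w (inr i) + Pd D (inr i) + Pflow P (inr i))) /\
      ((forall i : NM, PM i = Pd D (inl i) + Bflow psi (inl i))) /\
      ((forall i : NL, PL i = Pd D (inr i) + Bflow psi (inr i))) /\
      ((forall i : NM, PMlo D i <= PM i <= PMup D i)) /\
      ((forall i : NL, PLlo D i <= PL i <= PLup D i)
    /\ (forall i j : N, E D i j ->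
          Plo D i j <= Bl D i j * (psi i - psi j) <= Pup D i j)).

Definition OFCmod_cost (w : N -> R) (PM : NM -> R) (PL : NL -> R) : R :=
  gen_cost PM PL
  + 2^-1 * \sum_(i : NM) kM D i * w (inl i) ^+ 2
  + 2^-1 * \sum_(i : NL) kL D i * w (inr i) ^+ 2.

Definition OFCmod_optimal (w : N -> R) (PM : NM -> R) (PL : NL -> R)
    (P : N -> N -> R) (psi : N -> R) : Prop :=
  OFCmod_feasible w PM PL P psi /\
  forall w' PM' PL' P' psi', OFCmod_feasible w' PM' PL' P' psi' ->
    OFCmod_cost w PM PL <= OFCmod_cost w' PM' PL'.

End Problems.

From HB Require Import structures.
From mathcomp Require Import all_boot all_order all_algebra.
Set Implicit Arguments. Unset Strict Implicit. Unset Printing Implicit Defensive.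
Import Order.TTheory GRing.Theory Num.Theory.
Local Open Scope ring_scope.

(* The objective of (OFC-mod) is the generation cost plus a droop penalty that
   does not depend on psi and is positive definite in w.  Every (OFC) point
   lifts to an (OFC-mod) point with w = 0 and line flows B_ij (th_i - th_j), at
   the same cost; in particular this applies to the shift of psi itself, so
   optimality forces the penalty, hence w, to vanish, and then the (OFC-mod)
   optimum is an (OFC) optimum. *)

Section WeightedSquares.
Variables (R : realFieldType) (I : finType) (k x : I -> R).
Hypothesis k_gt0 : forall i, 0 < k i.

Lemma wsqr_sum_ge0 : 0 <= \sum_i k i * x i ^+ 2.
Proof. by apply: sumr_ge0 => i _; rewrite mulr_ge0 ?sqr_ge0 ?ltW. Qed.

Lemma wsqr_sum_eq0 : \sum_i k i * x i ^+ 2 = 0 -> forall i, x i = 0.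
Proof.
move/eqP; rewrite psumr_eq0 => [/allP x0 i|i _]; last first.
  by rewrite mulr_ge0 ?sqr_ge0 ?ltW.
move: (x0 i (mem_index_enum _)) => /implyP/(_ isT).
by rewrite mulf_eq0 (gt_eqF (k_gt0 i)) sqrf_eq0 => /eqP.
Qed.

End WeightedSquares.

Section Relaxation.
Variables (R : realFieldType) (NM NL : finType) (D : network R NM NL).
Local Notation N := (bus NM NL).

Definition droop_penalty (w : N -> R) : R :=
  2^-1 * \sum_(i : NM) kM D i * w (inl i) ^+ 2
  + 2^-1 * \sum_(i : NL) kL D i * w (inr i) ^+ 2.

Definition line_flows (th : N -> R) (i j : N) : R := Bl D i j * (th i - th j).

Lemma OFCmod_costE w PM PL :
  OFCmod_cost D w PM PL = gen_cost D PM PL + droop_penalty w.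
Proof. by rewrite /OFCmod_cost addrA. Qed.

Lemma droop_penalty0 w : (forall i, w i = 0) -> droop_penalty w = 0.
Proof.
move=> w0; rewrite /droop_penalty !big1 ?mulr0 ?addr0 // => i _;
  by rewrite w0 expr0n mulr0.
Qed.

Lemma Bflow_shift th c i : Bflow D (fun k => th k - c) i = Bflow D th i.
Proof. by apply: eq_bigr => j _; rewrite opprB addrA subrK. Qed.

Lemma OFCmod_feasible_OFC w PM PL P psi :
  OFCmod_feasible D w PM PL P psi ->
  OFC_feasible D PM PL (fun i => psi i - psi (refb D)).
Proof.
move=> [_ [_ [balM [balL [boundM [boundL bound_flow]]]]]].
split; first by move=> i; rewrite Bflow_shift.
split; first by move=> i; rewrite Bflow_shift.
do 2 split => //; split; last by rewrite subrr.
by move=> i j ij; rewrite opprB addrA subrK; apply: bound_flow.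
Qed.

Lemma OFC_feasible_lift PM PL th :
  OFC_feasible D PM PL th ->
  OFCmod_feasible D (fun _ => 0) PM PL (line_flows th) th.
Proof.
move=> [balM [balL [boundM [boundL [bound_flow _]]]]].
split; first by move=> i; rewrite mulr0 add0r balM.
split; first by move=> i; rewrite mulr0 add0r balL.
by do 4 split => //.
Qed.

Hypotheses (kM_gt0 : forall i, 0 < kM D i) (kL_gt0 : forall i, 0 < kL D i).

Lemma droop_penalty_eq0 w : droop_penalty w <= 0 -> forall i, w i = 0.
Proof.
have half_ge0 : (0 : R) <= 2^-1 by rewrite invr_ge0.
have pM := mulr_ge0 half_ge0 (wsqr_sum_ge0 (fun i => w (inl i)) kM_gt0).
have pL := mulr_ge0 half_ge0 (wsqr_sum_ge0 (fun i => w (inr i)) kL_gt0).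
move=> pen_le0; have /eqP : droop_penalty w = 0.
  by apply/eqP; rewrite eq_le pen_le0 addr_ge0.
rewrite paddr_eq0 // !mulf_eq0 !invr_eq0 pnatr_eq0 /=.
move=> /andP[/eqP/(wsqr_sum_eq0 kM_gt0) wM0 /eqP/(wsqr_sum_eq0 kL_gt0) wL0].
by case=> i; [exact: wM0 | exact: wL0].
Qed.

End Relaxation.

Theorem lemma1 (R : realFieldType) (NM NL : finType) (D : network R NM NL)
  (hkM : forall i : NM, 0 < kM D i) (hkL : forall i : NL, 0 < kL D i)
  (hbM : forall i : NM, PMlo D i <= PMup D i)
  (hbL : forall i : NL, PLlo D i <= PLup D i)
  (hbE : forall i j, E D i j -> Plo D i j <= Pup D i j)
  (w : bus NM NL -> R) (PM : NM -> R) (PL : NL -> R)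
  (P : bus NM NL -> bus NM NL -> R) (psi : bus NM NL -> R) :
  OFCmod_optimal D w PM PL P psi ->
  (forall i, w i = 0) /\
  OFC_optimal D PM PL (fun i => psi i - psi (refb D)).
Proof.
move=> [feas opt].
have feas_OFC := OFCmod_feasible_OFC feas.
have w0 : forall i, w i = 0.
  apply: (droop_penalty_eq0 hkM hkL).
  have := opt _ _ _ _ _ (OFC_feasible_lift feas_OFC).
  by rewrite !OFCmod_costE (@droop_penalty0 _ _ _ D (fun=> 0)) // addr0 gerDl.
split=> //; split=> // PM' PL' th' feas'.
have := opt _ _ _ _ _ (OFC_feasible_lift feas').
by rewrite !OFCmod_costE !droop_penalty0 ?addr0.
Qed.
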